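(* Let $n\in\mathbb N$ and $X=C_2\sqcup L_n$, and let $a$ be the generator of the subgroup $C_2$ of $X$ (identified with $\langle a\rangle$). Then $\lambda(X)$ is a finite commutative Boolean semigroup, its set of idempotents $E(\lambda(X))$ equals $\lambda(X)\setminus\{a\}$, and $\mathcal E*a=a$ for every idempotent $\mathcal E$ of $\lambda(X)$.
   Context: $\lambda(X)$ is the set of maximal linked upfamilies on $X$ (an upfamily is a family of nonempty subsets closed under supersets; linked means any two members intersect; maximal linked means not properly contained in another linked upfamily), with each $x\in X$ identified with $\langle x\rangle=\{A\subset X:x\in A\}$ and operation $\mathcal A*\mathcal B=\big\langle \bigcup_{a\in A} a*B_a : A\in\mathcal A,\ \{B_a\}_{a\in A}\subset\mathcal B\big\rangle$, where $\langle\mathcal C\rangle=\{A\subset X:\exists C\in\mathcal C,\ C\subset A\}$. $C_2=\{1,-1\}$ under multiplication; $L_n=\{0,\dots,n-1\}$ with operation $\min$. For semigroups $(X,* )$, $(Y,\star)$, the disjoint ordered union $X\sqcup Y$ is the disjoint union with operation $x\circ y=x*y$ for $x,y\in X$; $x\circ y=x$ if $x\in X,y\in Y$; $x\circ y=y$ if $x\in Y,y\in X$; $x\circ y=x\star y$ for $x,y\in Y$. A semigroup is Boolean if $x^3=x$ for all $x$. *)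

From HB Require Import structures.
From mathcomp Require Import all_boot.
Set Implicit Arguments. Unset Strict Implicit. Unset Printing Implicit Defensive.

Section Upfamilies.
Variables (T : finType) (op : T -> T -> T).

Definition upfam (F : {set {set T}}) : bool :=
  (set0 \notin F) &&
  [forall A : {set T}, forall B : {set T}, (A \in F) && (A \subset B) ==> (B \in F)].

Definition linked (F : {set {set T}}) : bool :=
  [forall A in F, forall B in F, A :&: B != set0].

Definition mlu (F : {set {set T}}) : bool :=
  [&& upfam F, linked F &
   [forall G : {set {set T}}, [&& upfam G, linked G & F \subset G] ==> (G == F)]].

Definition pfam (x : T) : {set {set T}} := [set A : {set T} | x \in A].

Definition upcl (C : {set {set T}}) : {set {set T}} :=
  [set A : {set T} | [exists C0 in C, C0 \subset A]].

Definition lmulset (a : T) (B : {set T}) : {set T} := [set op a b | b in B].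

Definition fmul (FA FB : {set {set T}}) : {set {set T}} :=
  upcl [set C : {set T} | [exists A in FA, exists f : {ffun T -> {set T}},
          [forall a in A, f a \in FB] && (C == \bigcup_(a in A) lmulset a (f a))]].

End Upfamilies.

(* X = C_2 \sqcup L_n.  C_2 = {1,-1} is encoded as inl b with b = true for -1
   (multiplication = xor); L_n = 'I_n with min. *)
Definition Xn (n : nat) : finType := (bool + 'I_n)%type.

Definition Xop (n : nat) (x y : Xn n) : Xn n :=
  match x, y with
  | inl b, inl c => inl (b (+) c)
  | inl b, inr _ => inl b
  | inr _, inl c => inl c
  | inr i, inr j => inr (if (i <= j)%N then i else j)
  end.

Definition Xa (n : nat) : Xn n := inl true.

Definition lam (n : nat) := [pred F : {set {set Xn n}} | mlu F].
Definition lmul (n : nat) := @fmul (Xn n) (@Xop n).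

(* The development has three layers.
   1. On a finite inhabited type, a linked upfamily is maximal iff it is
      "prime": it contains C or ~C for every set C.  This yields closure of λ(T) under *,
      associativity for associative operations, <x> * <y> = <xy>, and a
      commutation criterion: if the translates x⁻¹C lying in G form a chain
      under inclusion, then C ∈ F * G implies C ∈ G * F.
   3. In X, every element x ≠ a is conservative (xy ∈ {x, y}) and a absorbs
      X \ {a}.  Hence F * F = F and F * <a> = <a> as soon as {a} ∉ F, while
      {a} ∈ F forces F = <a>, and <a> * <a> = <1> ≠ <a>.  For commutativity,
      the translates of a set C with a ∈ C ⇒ 1 ∈ C form a chain (L_n is a
      chain under min), and every set or its complement has this property. *)
From mathcomp Require Import all_boot zify.
Set Implicit Arguments. Unset Strict Implicit. Unset Printing Implicit Defensive.

Section MaximalLinked.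
Variables (T : finType) (t0 : T).
Implicit Types (F G : {set {set T}}) (A B C D : {set T}) (x : T).

Lemma upfamP F :
  reflect (set0 \notin F /\ forall A B, A \in F -> A \subset B -> B \in F) (upfam F).
Proof.
apply: (iffP andP) => -[F0 up]; split=> //.
- by move=> A B hA sAB; move/forallP/(_ A)/forallP/(_ B)/implyP: up; apply; rewrite hA.
- apply/forallP=> A; apply/forallP=> B; apply/implyP=> /andP[]; exact: up.
Qed.

Lemma linkedP F : reflect (forall A B, A \in F -> B \in F -> A :&: B != set0) (linked F).
Proof.
apply: (iffP forallP) => [lF A B hA hB | lF A].
- by move/implyP/(_ hA)/forallP/(_ B)/implyP/(_ hB): (lF A).
- by apply/implyP=> hA; apply/forallP=> B; apply/implyP; exact: lF.
Qed.

Lemma mlu_up F A B : mlu F -> A \in F -> A \subset B -> B \in F.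
Proof. by case/and3P=> /upfamP[_ up] _ _; apply: up. Qed.

Lemma mlu_meet F A B : mlu F -> A \in F -> B \in F -> A :&: B != set0.
Proof. by case/and3P=> _ /linkedP lF _; apply: lF. Qed.

Lemma mlu_neq0 F A : mlu F -> A \in F -> A != set0.
Proof. by move=> hF hA; rewrite -[A]setIid (mlu_meet hF hA hA). Qed.

Lemma mlu_max F G : mlu F -> upfam G -> linked G -> F \subset G -> G = F.
Proof. by case/and3P=> _ _ /forallP/(_ G)/implyP max uG lG sFG; apply/eqP/max/and3P. Qed.

(* A nonempty set meeting every member of a maximal F belongs to F:
   otherwise F together with the supersets of C is a larger linked upfamily. *)
Lemma mlu_extend F C : mlu F -> C != set0 ->
  (forall D, D \in F -> D :&: C != set0) -> C \in F.
Proof.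
move=> hF nzC meetC; set G := F :|: [set D : {set T} | C \subset D].
suff <- : G = F by rewrite !inE subxx orbT.
apply: mlu_max => //; last exact: subsetUl.
- apply/upfamP; split.
    by rewrite !inE negb_or subset0 nzC andbT; apply/negP=> /(mlu_neq0 hF); rewrite eqxx.
  move=> A B; rewrite !inE => /orP[hA | sCA] sAB; first by rewrite (mlu_up hF hA sAB).
  by rewrite (subset_trans sCA sAB) orbT.
- apply/linkedP => A B; rewrite !inE => /orP[hA | sCA] /orP[hB | sCB].
  + exact: mlu_meet hF hA hB.
  + exact: subset_neq0 (setISS (subxx A) sCB) (meetC _ hA).
  + by rewrite setIC; exact: subset_neq0 (setISS (subxx B) sCA) (meetC _ hB).
  + by apply: subset_neq0 (setISS sCA sCB) _; rewrite setIid.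
Qed.

Lemma mlu_setT F : mlu F -> [set: T] \in F.
Proof.
move=> hF; apply: (mlu_extend hF) => [|D hD]; first by apply/set0Pn; exists t0.
by rewrite setIT (mlu_neq0 hF).
Qed.

(* Primality: if C is not in F then ~C is, since otherwise C meets every
   member of F. *)
Lemma mlu_compl F C : mlu F -> C \notin F -> ~: C \in F.
Proof.
move=> hF hC; apply/negPn/negP=> hCc; case/negP: hC; apply: mlu_extend => //.
- by apply: contraNneq hCc => ->; rewrite setC0 mlu_setT.
- move=> D hD; apply: contraNneq hCc => /eqP.
  by rewrite setI_eq0 disjoints_subset => /(mlu_up hF hD).
Qed.

Lemma mlu_complE F C : mlu F -> (~: C \in F) = (C \notin F).
Proof.
move=> hF; apply/idP/idP => [hCc | ]; last exact: mlu_compl.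
by apply/negP=> hC; move: (mlu_meet hF hC hCc); rewrite setICr eqxx.
Qed.

Lemma mlu_prime F C : mlu F -> C \in F \/ ~: C \in F.
Proof. by move=> hF; rewrite mlu_complE //; case: (C \in F); [left | right]. Qed.

Lemma mlu_intro F : upfam F -> linked F -> (forall C, C \in F \/ ~: C \in F) -> mlu F.
Proof.
move=> uF lF prime; rewrite /mlu uF lF; apply/forallP=> G.
apply/implyP=> /and3P[_ /linkedP lG sFG]; rewrite eqEsubset sFG andbT.
apply/subsetP=> C hC; have [//|hCc] := prime C.
by move: (lG _ _ hC (subsetP sFG _ hCc)); rewrite setICr eqxx.
Qed.

Lemma mlu_sub F G : mlu F -> mlu G -> F \subset G -> F = G.
Proof. by move=> hF /and3P[uG lG _] sFG; symmetry; apply: mlu_max. Qed.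

Lemma mlu_eq_on_half (P : pred {set T}) F G : mlu F -> mlu G ->
  (forall C, P C || P (~: C)) -> (forall C, P C -> (C \in F) = (C \in G)) -> F = G.
Proof.
move=> hF hG half agree; apply: mlu_sub => //; apply/subsetP=> C hCF.
have [PC | nPC] := boolP (P C); first by rewrite -agree.
have PCc : P (~: C) by move: (half C); rewrite (negbTE nPC).
apply/negPn/negP=> /(mlu_compl hG); rewrite -agree // mlu_complE //.
by rewrite hCF.
Qed.

Lemma pfam_mlu x : mlu (pfam x).
Proof.
apply: mlu_intro.
- apply/upfamP; split; first by rewrite inE inE.
  by move=> A B; rewrite !inE => hA /subsetP; apply.
- by apply/linkedP=> A B; rewrite !inE => hA hB; apply/set0Pn; exists x; rewrite inE hA hB.
- by move=> C; rewrite !inE; case: (x \in C); [left | right].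
Qed.

Lemma pfam_eq F x : mlu F -> [set x] \in F -> F = pfam x.
Proof.
move=> hF hx; symmetry; apply: (mlu_sub (pfam_mlu x) hF).
by apply/subsetP=> A; rewrite inE => hA; apply: mlu_up hF hx _; rewrite sub1set.
Qed.

End MaximalLinked.

Section Products.
Variables (T : finType) (t0 : T) (op : T -> T -> T).
Implicit Types (F G H : {set {set T}}) (C D : {set T}) (x y : T).

Definition resid G C : {set T} := [set x | op x @^-1: C \in G].

Lemma in_resid G C x : (x \in resid G C) = (op x @^-1: C \in G).
Proof. by rewrite inE. Qed.

Lemma fmulP F G C : mlu F -> mlu G -> (C \in fmul op F G) = (resid G C \in F).
Proof.
move=> hF hG; rewrite /fmul /upcl inE; apply/existsP/idP.
- case=> C0 /andP[]; rewrite inE.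
  case/existsP=> A /andP[AF /existsP[f /andP[/forallP hf /eqP E]]] sub.
  apply: (mlu_up hF AF); apply/subsetP=> x xA; rewrite inE.
  apply: (mlu_up hG (implyP (hf x) xA)); apply/subsetP=> y yf; rewrite inE.
  by apply: (subsetP sub); rewrite E; apply/bigcupP; exists x => //; apply/imsetP; exists y.
- move=> hA; exists (\bigcup_(x in resid G C) lmulset op x (op x @^-1: C)).
  rewrite inE; apply/andP; split.
  + apply/existsP; exists (resid G C); rewrite hA /=.
    apply/existsP; exists [ffun x => op x @^-1: C]; apply/andP; split.
    * by apply/forallP=> x; apply/implyP; rewrite inE ffunE.
    * by apply/eqP; apply: eq_bigr=> x _; rewrite ffunE.
  + by apply/subsetP=> z /bigcupP[x _ /imsetP[y]]; rewrite inE => hy ->.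
Qed.

Lemma resid0 G : mlu G -> resid G set0 = set0.
Proof.
move=> hG; apply/setP=> x; rewrite !inE preimset0.
by apply/negP=> /(mlu_neq0 hG); rewrite eqxx.
Qed.

Lemma residC G C : mlu G -> resid G (~: C) = ~: resid G C.
Proof. by move=> hG; apply/setP=> x; rewrite !inE preimsetC (mlu_complE t0). Qed.

Lemma fmul_mlu F G : mlu F -> mlu G -> mlu (fmul op F G).
Proof.
move=> hF hG; apply: mlu_intro.
- apply/upfamP; split=> [|C D]; rewrite ?fmulP // ?resid0 //.
    by apply/negP=> /(mlu_neq0 hF); rewrite eqxx.
  move=> hC sCD; apply: (mlu_up hF hC); apply/subsetP=> x; rewrite !inE => hx.
  exact: mlu_up hG hx (preimsetS _ sCD).
- apply/linkedP => C D; rewrite !fmulP // => hC hD.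
  have /set0Pn[x] := mlu_meet hF hC hD; rewrite !inE => /andP[hxC hxD].
  have /set0Pn[y] := mlu_meet hG hxC hxD; rewrite !inE => /andP[hyC hyD].
  by apply/set0Pn; exists (op x y); rewrite inE hyC hyD.
- by move=> C; rewrite !fmulP // residC //; apply: mlu_prime.
Qed.

Lemma fmul_pfam x y : fmul op (pfam x) (pfam y) = pfam (op x y).
Proof. by apply/setP=> C; rewrite fmulP ?pfam_mlu // !inE. Qed.

Section Associative.
Hypothesis opA : associative op.

Lemma preim_resid G C x : op x @^-1: resid G C = resid G (op x @^-1: C).
Proof.
by apply/setP=> y; rewrite !inE; congr (_ \in G); apply/setP=> z; rewrite !inE opA.
Qed.

Lemma resid_fmul F G C : mlu F -> mlu G -> resid (fmul op F G) C = resid F (resid G C).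
Proof. by move=> hF hG; apply/setP=> x; rewrite !in_resid fmulP // preim_resid. Qed.

(* Associativity: both sides contain C iff resid G (resid H C) lies in F. *)
Lemma fmulA F G H : mlu F -> mlu G -> mlu H ->
  fmul op (fmul op F G) H = fmul op F (fmul op G H).
Proof.
move=> hF hG hH; apply/setP=> C.
by rewrite fmulP ?fmul_mlu // fmulP // [RHS]fmulP ?fmul_mlu // resid_fmul.
Qed.

End Associative.

Section Commutative.
Hypothesis opC : commutative op.

Lemma fmul_pfamC F c : mlu F -> fmul op F (pfam c) = fmul op (pfam c) F.
Proof.
move=> hF; apply/setP=> C; rewrite !fmulP ?pfam_mlu // [in RHS]inE in_resid.
by congr (_ \in F); apply/setP=> y; rewrite !inE opC.
Qed.

(* Pick x0 in the residual A of C by G with the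
   smallest translate x0⁻¹C; if the residual of C by F were not in G, there
   would be y ∈ x0⁻¹C and x ∈ A with y ∉ x⁻¹C, contradicting that x0⁻¹C is
   the least element of the chain of translates. *)
Lemma fmul_comm_of_chain F G C : mlu F -> mlu G ->
  (forall x x', op x @^-1: C \in G -> op x' @^-1: C \in G ->
     (op x @^-1: C \subset op x' @^-1: C) || (op x' @^-1: C \subset op x @^-1: C)) ->
  C \in fmul op F G -> C \in fmul op G F.
Proof.
move=> hF hG chain; rewrite !fmulP // => hA.
apply/negPn/negP=> /(mlu_compl t0 hG) hBc.
have /set0Pn[x1 hx1] := mlu_neq0 hF hA.
have [x0 hx0 minx0] := arg_minnP (fun x => #|op x @^-1: C|) hx1.
have hx0G : op x0 @^-1: C \in G by rewrite -in_resid.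
have /set0Pn[y] := mlu_meet hG hx0G hBc.
rewrite !inE => /andP[hx0y /(mlu_compl t0 hF) hyF].
have /set0Pn[x] := mlu_meet hF hA hyF; rewrite !inE opC => /andP[hxG hxy].
have [sub | sub] := orP (chain _ _ hx0G hxG).
  by move: (subsetP sub y); rewrite !inE hx0y (negbTE hxy) => /(_ isT).
have hxA : x \in resid G C by rewrite in_resid.
have /eqP eqx : op x @^-1: C == op x0 @^-1: C by rewrite eqEcard sub minx0.
by move/setP/(_ y): eqx; rewrite !inE hx0y (negbTE hxy).
Qed.

End Commutative.
End Products.

Definition Xe (n : nat) : Xn n := inl false.

(* For any predicate p on nat, the sets {j | p (min i j)} are totally ordered
   by inclusion: no pair j, j' separates two of them in opposite directions. *)
Lemma minn_translates_chain (p : pred nat) i i' j j' :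
  p (minn i j) -> ~~ p (minn i' j) -> p (minn i' j') -> ~~ p (minn i j') -> False.
Proof.
wlog le_ii' : i i' j j' / i <= i'.
  move=> H h1 h2 h3 h4; case: (leqP i i') => [le_ii' | /ltnW le_i'i].
    exact: H h1 h2 h3 h4.
  exact: H i' i j' j le_i'i h3 h4 h1 h2.
move=> h1 h2 h3 h4; case: (leqP j i) => [le_ji | lt_ij].
  have E : minn i' j = minn i j by lia.
  by rewrite E h1 in h2.
case: (leqP i j') => [le_ij' | lt_j'i].
  have E : minn i j' = minn i j by lia.
  by rewrite E h1 in h4.
have E : minn i' j' = minn i j' by lia.
by rewrite E (negbTE h4) in h3.
Qed.

Section SumC2Ln.
Variable n : nat.
Local Notation X := (Xn n).
Local Notation op := (@Xop n).
Local Notation a := (Xa n).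
Local Notation e := (Xe n).
Implicit Types (F G : {set {set X}}) (C : {set X}) (x y : X).

Lemma Xop_min (i j : 'I_n) : val (if (i <= j)%N then i else j) = minn i j.
Proof. by case: leqP => h /=; lia. Qed.

Lemma XopA : associative op.
Proof.
case=> [b|i] [c|j] [d|k] //=; first by rewrite addbA.
by congr inr; apply: val_inj; rewrite !Xop_min minnA.
Qed.

Lemma XopC : commutative op.
Proof.
case=> [b|i] [c|j] //=; first by rewrite addbC.
by congr inr; apply: val_inj; rewrite !Xop_min minnC.
Qed.

Lemma Xop_conservative x y : x != a -> (op x y == x) || (op x y == y).
Proof.
case: x => [[|]|i] // _; case: y => [c|j] /=; rewrite ?eqxx ?orbT //.
by case: leqP; rewrite eqxx ?orbT.
Qed.

Lemma Xop_aL y : y != a -> op a y = a.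
Proof. by case: y => [[|]|j]. Qed.

Definition Xgood C := (a \in C) ==> (e \in C).

Lemma Xgood_half C : Xgood C || Xgood (~: C).
Proof. by rewrite /Xgood !inE; case: (a \in C); case: (e \in C). Qed.

Definition Xmem_ord C (k : nat) := [exists z : 'I_n, (val z == k) && (inr z \in C)].

Lemma Xmem_ordE C (z : 'I_n) : Xmem_ord C (val z) = (inr z \in C).
Proof.
apply/existsP/idP => [[w /andP[/eqP/val_inj -> //]] | hz].
by exists z; rewrite eqxx hz.
Qed.

(* For a good C, translates x⁻¹C never cross, except when x = a, 1 ∈ C and
   a ∉ C.  A finite case analysis reduces everything to the chain property of
   min on L_n. *)
Lemma Xop_no_crossing C x x' y y' : Xgood C ->
  (x == a) && (e \in C) ==> (a \in C) -> (x' == a) && (e \in C) ==> (a \in C) ->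
  op x y \in C -> op x' y \notin C -> op x' y' \in C -> op x y' \notin C -> False.
Proof.
rewrite /Xgood /Xe /Xa.
case: x x' y y' => [b|i] [b'|i'] [c|j] [c'|j'] /=.
all: try case: b; try case: b'; try case: c; try case: c'.
all: case: ((inl true : X) \in C); case: ((inl false : X) \in C) => //=.
all: move=> _ _ _; rewrite -!Xmem_ordE !Xop_min.
all: exact: minn_translates_chain.
Qed.

(* The exceptional translate of the previous lemma is the singleton {a}. *)
Lemma Xpreim_a C : e \in C -> a \notin C -> op a @^-1: C = [set a].
Proof.
move=> he ha; apply/setP=> y; rewrite !inE.
by case: y => [[|]|j] //=; rewrite (negbTE ha).
Qed.

Lemma Xtranslates_chain G C x x' : [set a] \notin G -> Xgood C ->
  op x @^-1: C \in G -> op x' @^-1: C \in G ->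
  (op x @^-1: C \subset op x' @^-1: C) || (op x' @^-1: C \subset op x @^-1: C).
Proof.
move=> haG good hx hx'.
have regular z : op z @^-1: C \in G -> (z == a) && (e \in C) ==> (a \in C).
  move=> hz; apply/implyP=> /andP[/eqP za he]; apply/negPn/negP=> ha.
  by move: hz; rewrite za Xpreim_a // (negbTE haG).
have [// | /subsetPn[y]] := boolP (op x @^-1: C \subset op x' @^-1: C).
rewrite !inE => hxy hx'y; apply/subsetP=> y'; rewrite !inE => hx'y'.
apply/negPn/negP=> hxy'.
exact: Xop_no_crossing good (regular _ hx) (regular _ hx') hxy hx'y hx'y' hxy'.
Qed.

Lemma Xfmul_comm F G : mlu F -> mlu G -> fmul op F G = fmul op G F.
Proof.
move=> hF hG.
have [haF | haF] := boolP ([set a] \in F).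
  by rewrite (pfam_eq hF haF) (fmul_pfamC XopC).
have [haG | haG] := boolP ([set a] \in G).
  by rewrite (pfam_eq hG haG) (fmul_pfamC XopC).
apply: (mlu_eq_on_half e (fmul_mlu e op hF hG) (fmul_mlu e op hG hF) Xgood_half).
move=> C good; apply/idP/idP; apply: (fmul_comm_of_chain e XopC) => //.
all: by move=> x x'; apply: Xtranslates_chain.
Qed.

(* F * F = F when {a} ∉ F: each C ∈ F lies in its own residual, because
   conservative points x ∈ C satisfy C ⊆ x⁻¹C and a⁻¹C contains X \ {a} ∈ F. *)
Lemma Xfmul_idem F : mlu F -> [set a] \notin F -> fmul op F F = F.
Proof.
move=> hF haF; symmetry; apply: (mlu_sub hF (fmul_mlu e op hF hF)).
apply/subsetP=> C hC; rewrite fmulP //; apply: (mlu_up hF hC).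
apply/subsetP=> x hx; rewrite in_resid.
have [xa | nxa] := eqVneq x a.
  apply: (mlu_up hF (mlu_compl e hF haF)); apply/subsetP=> y; rewrite !inE => nya.
  by rewrite xa Xop_aL // -xa.
apply: (mlu_up hF hC); apply/subsetP=> y hy; rewrite inE.
by case/orP: (Xop_conservative y nxa) => /eqP ->.
Qed.

(* E * <a> = <a> when {a} ∉ E, since x a = a for every x ≠ a. *)
Lemma Xfmul_pfam_a F : mlu F -> [set a] \notin F -> fmul op F (pfam a) = pfam a.
Proof.
move=> hF haF; symmetry; apply: (mlu_sub (pfam_mlu a) (fmul_mlu e op hF (pfam_mlu a))).
apply/subsetP=> C; rewrite inE => haC; rewrite fmulP ?pfam_mlu //.
apply: (mlu_up hF (mlu_compl e hF haF)); apply/subsetP=> x; rewrite !inE => nxa.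
by rewrite XopC Xop_aL.
Qed.

(* <a> is not idempotent: <a> * <a> = <1>. *)
Lemma Xfmul_pfam_aa : fmul op (pfam a) (pfam a) <> pfam a.
Proof. by rewrite fmul_pfam => /setP/(_ [set e]); rewrite !inE eqxx. Qed.

End SumC2Ln.

Theorem proposition4p3 (n : nat) :
  (* <a> is an element of lambda(X) *)
  pfam (Xa n) \in lam n /\
  (* lambda(X) is closed under * *)
  (forall F G, F \in lam n -> G \in lam n -> lmul F G \in lam n) /\
  (* associativity *)
  (forall F G H, F \in lam n -> G \in lam n -> H \in lam n ->
     lmul (lmul F G) H = lmul F (lmul G H)) /\
  (* commutativity *)
  (forall F G, F \in lam n -> G \in lam n -> lmul F G = lmul G F) /\
  (* Boolean: F^3 = F *)
  (forall F, F \in lam n -> lmul (lmul F F) F = F) /\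
  (* E(lambda(X)) = lambda(X) \ {<a>} *)
  (forall F, F \in lam n -> (lmul F F = F <-> F <> pfam (Xa n))) /\
  (* E * a = a for every idempotent E *)
  (forall E, E \in lam n -> lmul E E = E -> lmul E (pfam (Xa n)) = pfam (Xa n)).
Proof.
have a_cases F : mlu F -> F = pfam (Xa n) \/ [set Xa n] \notin F.
  by move=> hF; have [/(pfam_eq hF) | ] := boolP ([set Xa n] \in F); [left | right].
have not_a F : mlu F -> F <> pfam (Xa n) -> [set Xa n] \notin F.
  by move=> hF nFa; case: (a_cases F hF).
rewrite /lmul; split; first exact: pfam_mlu.
split; first by move=> F G hF hG; exact: (fmul_mlu (Xe n) _ hF hG).
split; first by move=> F G H hF hG hH; exact: (fmulA (Xe n) (@XopA n) hF hG hH).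
split; first by move=> F G hF hG; exact: (Xfmul_comm hF hG).
split.
  move=> F hF; have [-> | haF] := a_cases F hF; first by rewrite !fmul_pfam.
  by rewrite !Xfmul_idem.
split.
  move=> F hF; split=> [idF eFa | nFa]; last exact: Xfmul_idem (not_a F hF nFa).
  by apply: (@Xfmul_pfam_aa n); rewrite -eFa.
move=> E hE idE; apply: Xfmul_pfam_a => //; apply: not_a => // eEa.
by apply: (@Xfmul_pfam_aa n); rewrite -eEa.
Qed.
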